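(* Let $s\ge1$, $m_1,n_1>0$, and $1<n_2<m_2$. Let $n(x)=n_1(x+n_2)^N$ and $m(x)=m_1(x+m_2)^M$. If $M>\frac{N+1+s}{2}$, $0<N<1$ and $$m_2^{1-N}>\frac{m_1n_1+Mm_1^2n_1+n_1^2}{m_1^2},$$ then $$(1+n'(x))m^2(x)-(1+m'(x))m(x)n(x)-(x+1)^s n^2(x)>0\quad\text{for all }x\ge0.$$ *)

From Stdlib Require Import Reals.
From Coquelicot Require Import Coquelicot.
Open Scope R_scope.

Definition nfun (n1 n2 N : R) (x : R) : R := n1 * Rpower (x + n2) N.
Definition mfun (m1 m2 M : R) (x : R) : R := m1 * Rpower (x + m2) M.

(* With a = x + n2, b = x + m2 and x + 1 all at most b, every negative term of the expression is
   bounded by a constant multiple of b^(2M-1+N): the exponents M+N and s+2N are smaller because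
   M > 1 and 2M > s+N+1.  The leading term m1^2 b^(2M) = m1^2 b^(1-N) b^(2M-1+N) is at least
   m1^2 m2^(1-N) b^(2M-1+N), and the hypothesis on m2^(1-N) says exactly that this beats the sum
   of the constants m1 n1 + M m1^2 n1 + n1^2. *)

From Stdlib Require Import Reals Lra.
From Coquelicot Require Import Coquelicot.
Open Scope R_scope.

Lemma Rpower_pos (b y : R) : 0 < Rpower b y.
Proof. unfold Rpower; apply exp_pos. Qed.

Lemma Derive_scal_Rpower_shift (c d e x : R) : 0 < x + d ->
  Derive (fun t => c * Rpower (t + d) e) x = c * (e * Rpower (x + d) (e - 1)).
Proof.
  intro Hxd; apply is_derive_unique, is_derive_scal.
  assert (Dpow : is_derive (fun y => Rpower y e) (x + d) (e * Rpower (x + d) (e - 1))).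
  { apply is_derive_Reals, derivable_pt_lim_power; exact Hxd. }
  assert (Dshift : is_derive (fun t => t + d) x 1) by (auto_derive; auto; ring).
  pose proof (is_derive_comp _ _ x _ _ Dpow Dshift) as Dcomp.
  cbv [scal mult] in Dcomp; simpl in Dcomp.
  now rewrite Rmult_1_l in Dcomp.
Qed.

Lemma expression_ge_powers_of_upper_base (m1 n1 M N s a b c : R) :
  0 < m1 -> 0 < n1 -> 0 <= M -> 0 <= N -> 0 <= s -> 0 < a <= b -> 0 < c <= b ->
  (1 + n1 * (N * Rpower a (N - 1))) * (m1 * Rpower b M) ^ 2
  - (1 + m1 * (M * Rpower b (M - 1))) * (m1 * Rpower b M) * (n1 * Rpower a N)
  - Rpower c s * (n1 * Rpower a N) ^ 2
  >= m1 ^ 2 * Rpower b (2 * M) - m1 * n1 * Rpower b (M + N)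
     - m1 ^ 2 * M * n1 * Rpower b (2 * M - 1 + N) - n1 ^ 2 * Rpower b (s + 2 * N).
Proof.
  intros Hm1 Hn1 HM HN Hs Hab Hcb.
  replace (2 * M - 1 + N) with (M - 1 + M + N) by ring.
  replace (2 * M) with (M + M) by ring.
  replace (s + 2 * N) with (s + N + N) by ring.
  rewrite !Rpower_plus.
  assert (HaN : Rpower a N <= Rpower b N) by (apply Rle_Rpower_l; lra).
  assert (Hcs : Rpower c s <= Rpower b s) by (apply Rle_Rpower_l; lra).
  pose proof (Rpower_pos a N) as PaN; pose proof (Rpower_pos b N) as PbN.
  pose proof (Rpower_pos b M) as PbM; pose proof (Rpower_pos b (M - 1)) as PbM1.
  pose proof (Rpower_pos c s) as Pcs; pose proof (Rpower_pos a (N - 1)) as PaN1.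
  assert (Hderiv : 0 <= n1 * (N * Rpower a (N - 1)) * (m1 * Rpower b M) ^ 2).
  { apply Rmult_le_pos; [|apply pow2_ge_0]. apply Rmult_le_pos; [lra|]. apply Rmult_le_pos; lra. }
  assert (Hm1n1bM : 0 <= m1 * n1 * Rpower b M).
  { apply Rmult_le_pos; [apply Rmult_le_pos|]; lra. }
  assert (Hcross : m1 * Rpower b M * (n1 * Rpower a N) <= m1 * n1 * (Rpower b M * Rpower b N)).
  { pose proof (Rmult_le_compat_l _ _ _ Hm1n1bM HaN). lra. }
  assert (Hsq : Rpower c s * Rpower a N ^ 2 <= Rpower b s * Rpower b N * Rpower b N).
  { rewrite Rmult_assoc. apply Rmult_le_compat; [lra | apply pow2_ge_0 | lra | nra]. }
  assert (HMcross : 0 <= m1 * M * Rpower b (M - 1)) by (apply Rmult_le_pos; [apply Rmult_le_pos|]; lra).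
  assert (Hn1sq : 0 <= n1 ^ 2) by apply pow2_ge_0.
  pose proof (Rmult_le_compat_l _ _ _ HMcross Hcross) as HMcross'.
  pose proof (Rmult_le_compat_l _ _ _ Hn1sq Hsq) as Hsq'.
  lra.
Qed.

Lemma powers_of_upper_base_ge_dominant (m1 n1 m2 M N s b : R) :
  0 < m1 -> 0 < n1 -> 0 < m2 <= b -> 1 < b -> N <= 1 -> 1 <= M -> s + N + 1 <= 2 * M ->
  m1 ^ 2 * Rpower b (2 * M) - m1 * n1 * Rpower b (M + N)
  - m1 ^ 2 * M * n1 * Rpower b (2 * M - 1 + N) - n1 ^ 2 * Rpower b (s + 2 * N)
  >= Rpower b (2 * M - 1 + N) * (m1 ^ 2 * Rpower m2 (1 - N) - m1 * n1 - m1 ^ 2 * M * n1 - n1 ^ 2).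
Proof.
  intros Hm1 Hn1 Hm2b Hb HN HM HsNM.
  set (P := Rpower b (2 * M - 1 + N)).
  assert (HP : 0 < P) by apply Rpower_pos.
  assert (Hlead : Rpower m2 (1 - N) * P <= Rpower b (2 * M)).
  { replace (2 * M) with (1 - N + (2 * M - 1 + N)) by ring.
    rewrite Rpower_plus; apply Rmult_le_compat_r; [apply Rlt_le, Rpower_pos|].
    apply Rle_Rpower_l; lra. }
  assert (Hcross : Rpower b (M + N) <= P) by (apply Rle_Rpower; lra).
  assert (Hsq : Rpower b (s + 2 * N) <= P) by (apply Rle_Rpower; lra).
  assert (Hm1n1 : 0 < m1 * n1) by (apply Rmult_lt_0_compat; lra).
  assert (Hm1sq : 0 < m1 ^ 2) by (apply pow_lt; lra).
  assert (Hn1sq : 0 < n1 ^ 2) by (apply pow_lt; lra).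
  pose proof (Rmult_le_compat_l _ _ _ (Rlt_le _ _ Hm1sq) Hlead).
  pose proof (Rmult_le_compat_l _ _ _ (Rlt_le _ _ Hm1n1) Hcross).
  pose proof (Rmult_le_compat_l _ _ _ (Rlt_le _ _ Hn1sq) Hsq).
  lra.
Qed.

Theorem lemma4p1 (s m1 n1 m2 n2 M N : R) :
  1 <= s -> 0 < m1 -> 0 < n1 -> 1 < n2 -> n2 < m2 ->
  M > (N + 1 + s) / 2 -> 0 < N -> N < 1 ->
  Rpower m2 (1 - N) > (m1 * n1 + M * m1 ^ 2 * n1 + n1 ^ 2) / m1 ^ 2 ->
  forall x : R, 0 <= x ->
    (1 + Derive (nfun n1 n2 N) x) * (mfun m1 m2 M x) ^ 2
    - (1 + Derive (mfun m1 m2 M) x) * mfun m1 m2 M x * nfun n1 n2 N x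
    - Rpower (x + 1) s * (nfun n1 n2 N x) ^ 2 > 0.
Proof.
  intros Hs Hm1 Hn1 Hn2 Hm2 HM HN0 HN1 Hm2N x Hx.
  unfold nfun, mfun.
  rewrite !Derive_scal_Rpower_shift by lra.
  assert (Hconst : 0 < m1 ^ 2 * Rpower m2 (1 - N) - m1 * n1 - m1 ^ 2 * M * n1 - n1 ^ 2).
  { apply Rlt_div_l in Hm2N; [|apply pow_lt; lra]. lra. }
  pose proof (Rpower_pos (x + m2) (2 * M - 1 + N)) as HP.
  apply Rlt_le_trans with (1 := Rmult_lt_0_compat _ _ HP Hconst).
  eapply Rle_trans; [apply Rge_le, (powers_of_upper_base_ge_dominant _ _ _ _ _ s); lra|].
  apply Rge_le, expression_ge_powers_of_upper_base; lra.
Qed.
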